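(* Let $G$ be a two-player game with a finite set $\mathcal{P}$ of positions as in the context, let $\alpha$ be as defined there, and let $x$ be a Richman function for $G$. Let $T$ be the set defined from $x$ as in the context. Then $\alpha(P)=x(P)$ for all $P\in\mathcal{P}$ if and only if every position $P$ with $x(P)>0$ belongs to $T$.
   Context: The game is given by a finite set $\mathcal{P}$ of positions; each non-terminal position $P$ has a nonempty set of White options $P_w$ and a nonempty set of Black options $P_b$ (positions to which White, resp. Black, can move). Terminal positions are designated as White wins or Black wins. Define $\alpha_n:\mathcal{P}\to[0,1]$ by $\alpha_n(P)=1$ (resp. $0$) for all $n$ if $P$ is a terminal White (resp. Black) win, $\alpha_0(P)=0$ for non-terminal $P$, and $\alpha_{n+1}(P)=\frac12(\max_w\alpha_n(P_w)+\min_b\alpha_n(P_b))$ for non-terminal $P$; let $\alpha(P)=\lim_n\alpha_n(P)$ (the sequence is nondecreasing). A Richman function is a function $x:\mathcal{P}\to[0,1]$ with $x(P)=1$ at terminal White wins, $x(P)=0$ at terminal Black wins, and $x(P)=\frac12(\max_w x(P_w)+\min_b x(P_b))$ at every non-terminal $P$. A White move from $P$ to $P_w$ is $x$-greedy if $x(P_w)=\max_{w'}x(P_{w'})$. Let $T_0$ be the set of terminal positions, and for $n\ge0$ let $T_{n+1}$ consist of the positions that belong to $T_n$, or have an $x$-greedy White option in $T_n$, or have all of their Black options in $T_n$. Let $T=\bigcup_n T_n$. *)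

From HB Require Import structures.
From mathcomp Require Import all_boot all_order all_algebra.
From mathcomp Require Import all_classical all_reals all_analysis.
Set Implicit Arguments. Unset Strict Implicit. Unset Printing Implicit Defensive.
Import Order.TTheory GRing.Theory Num.Theory numFieldNormedType.Exports.
Local Open Scope ring_scope.

Section Game.
Variables (R : realType) (P : finType).
(* term p : p is terminal; wwin p : (for terminal p) White wins at p;
   W p, B p : sets of White / Black options of p. *)
Variables (term wwin : pred P) (W B : P -> {set P}).

(* maximum / minimum of f over a set S (used only for nonempty S) *)
Definition smax (S : {set P}) (f : P -> R) : R :=
  match [pick q in S] with
  | Some q0 => \big[Num.max/f q0]_(q in S) f q
  | None => 0 end.
Definition smin (S : {set P}) (f : P -> R) : R :=
  match [pick q in S] with
  | Some q0 => \big[Num.min/f q0]_(q in S) f q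
  | None => 0 end.

Definition termval (p : P) : R := if wwin p then 1 else 0.

Fixpoint alphan (n : nat) (p : P) : R :=
  if term p then termval p else
  match n with
  | 0 => 0
  | n'.+1 => (smax (W p) (alphan n') + smin (B p) (alphan n')) / 2
  end.

Definition alpha (p : P) : R := limn (fun n => alphan n p).

Definition richman (x : P -> R) : Prop :=
  (forall p, 0 <= x p <= 1) /\
  (forall p, term p -> x p = termval p) /\
  (forall p, ~~ term p -> x p = (smax (W p) x + smin (B p) x) / 2).

Definition greedy (x : P -> R) (p q : P) : bool :=
  (q \in W p) && (x q == smax (W p) x).

Fixpoint Tn (x : P -> R) (n : nat) : {set P} :=
  match n with
  | 0 => [set p | term p]
  | n'.+1 => [set p | (p \in Tn x n')
                   || [exists q in W p, greedy x p q && (q \in Tn x n')]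
                   || (B p \subset Tn x n')]
  end.

Definition inT (x : P -> R) (p : P) : Prop := exists n, p \in Tn x n.
End Game.

From HB Require Import structures.
From mathcomp Require Import all_boot all_order all_algebra.
From mathcomp Require Import all_classical all_reals all_analysis.
From mathcomp Require Import ring lra.
Import Order.TTheory GRing.Theory Num.Theory numFieldNormedType.Exports.
Local Open Scope ring_scope.
Set Implicit Arguments. Unset Strict Implicit.

(* If every position of positive value lies in T, say in T_K, then K further
   steps of value iteration shrink the error x - alpha_n by the factor
   1 - 2^-K: at a position of T_(j+1) one of the two averaged errors (at a
   greedy White option, or at the minimizing Black option) is already bounded
   as on T_j.  Hence alpha = x.
   Conversely, the positions outside T form a greedy trap: greedy White moves
   and some Black move stay inside it.  On the plateau where x attains its
   maximum M > 0 over the trap, the Richman equation keeps the greedy value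
   and some Black option at M, so lowering x to the next smaller value on the
   plateau still gives a supersolution, which bounds alpha from above. *)

Section SetExtrema.
Variables (R : realType) (P : finType).
Implicit Types (S : {set P}) (f g : P -> R).

Lemma smax_set0 f : smax finset.set0 f = 0.
Proof. by rewrite /smax; case: pickP => // q; rewrite inE. Qed.

Lemma smin_set0 f : smin finset.set0 f = 0.
Proof. by rewrite /smin; case: pickP => // q; rewrite inE. Qed.

Lemma smax_mem S f : S != finset.set0 -> exists2 q, q \in S & smax S f = f q.
Proof.
case/set0Pn => q0 q0S; rewrite /smax; case: pickP => [q1 q1S|/(_ q0)]; last by rewrite q0S.
apply: (big_ind (fun v => exists2 q, q \in S & v = f q)) => [|u v [q qS ->] [r rS ->]|q qS].
- by exists q1.
- by rewrite /Num.max; case: ifP => _; [exists r|exists q].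
- by exists q.
Qed.

Lemma smin_mem S f : S != finset.set0 -> exists2 q, q \in S & smin S f = f q.
Proof.
case/set0Pn => q0 q0S; rewrite /smin; case: pickP => [q1 q1S|/(_ q0)]; last by rewrite q0S.
apply: (big_ind (fun v => exists2 q, q \in S & v = f q)) => [|u v [q qS ->] [r rS ->]|q qS].
- by exists q1.
- by rewrite /Num.min; case: ifP => _; [exists q|exists r].
- by exists q.
Qed.

Lemma le_smax S f q : q \in S -> f q <= smax S f.
Proof.
move=> qS; rewrite /smax; case: pickP => [q0 _|/(_ q)]; last by rewrite qS.
exact: le_bigmax_cond.
Qed.

Lemma smin_le S f q : q \in S -> smin S f <= f q.
Proof.
move=> qS; rewrite /smin; case: pickP => [q0 _|/(_ q)]; last by rewrite qS.
exact: bigmin_le_cond.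
Qed.

Lemma smax_le S f c : 0 <= c -> {in S, forall q, f q <= c} -> smax S f <= c.
Proof.
have [->|/(smax_mem f) [q qS ->]] := eqVneq S finset.set0; first by rewrite smax_set0.
by move=> _; apply.
Qed.

Lemma le_smax2 S f g : {in S, forall q, f q <= g q} -> smax S f <= smax S g.
Proof.
have [->|/(smax_mem f) [q qS ->]] := eqVneq S finset.set0; first by rewrite !smax_set0.
by move=> fg; apply: le_trans (fg q qS) (le_smax g qS).
Qed.

Lemma le_smin2 S f g : {in S, forall q, f q <= g q} -> smin S f <= smin S g.
Proof.
have [->|/(smin_mem g) [q qS ->]] := eqVneq S finset.set0; first by rewrite !smin_set0.
by move=> fg; apply: le_trans (smin_le f qS) (fg q qS).
Qed.

Lemma smax_ge0 S f : (forall q, 0 <= f q) -> 0 <= smax S f.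
Proof.
by have [->|/(smax_mem f) [q _ ->]] := eqVneq S finset.set0; rewrite ?smax_set0.
Qed.

Lemma smin_ge0 S f : (forall q, 0 <= f q) -> 0 <= smin S f.
Proof.
by have [->|/(smin_mem f) [q _ ->]] := eqVneq S finset.set0; rewrite ?smin_set0.
Qed.

Lemma exists_gap_below f (M : R) : 0 < M ->
  exists2 c, 0 <= c < M & forall q, f q < M -> f q <= c.
Proof.
move=> M0; pose L := [set q | f q < M].
exists (Num.max 0 (smax L f)) => [|q fqM]; last first.
  by rewrite le_max le_smax ?orbT // inE.
rewrite le_max lexx gt_max M0 /=.
have [->|/(smax_mem f) [q]] := eqVneq L finset.set0; first by rewrite smax_set0.
by rewrite inE => + ->.
Qed.

End SetExtrema.

Lemma le0_of_le_powers (R : realType) (d l : R) :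
  0 <= l < 1 -> (forall t, d <= l ^+ t) -> d <= 0.
Proof.
case/andP=> l0 l1 dl; have /cvg_lim <- // : (l ^+ t @[t --> \oo] --> (0 : R))%classic.
  by apply: cvg_expr; rewrite ger0_norm.
apply: limr_ge; first by apply/cvg_ex; exists 0; apply: cvg_expr; rewrite ger0_norm.
exact: nearW.
Qed.

Lemma one_sub_halfX_itv (R : numFieldType) k : 0 <= 1 - (2^-1 : R) ^+ k < 1.
Proof.
rewrite subr_ge0 ltrBlDr ltrDl exprn_gt0 ?invr_gt0 // andbT.
by rewrite exprn_ile1 ?invr_ge0 // invf_le1 ?ler1n.
Qed.

Section ValueIteration.
Variables (R : realType) (P : finType) (term wwin : pred P) (W B : P -> {set P}).
Local Notation alpha_ n := (alphan R term wwin W B n).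
Local Notation alpha := (alpha R term wwin W B).

Definition richman_super (y : P -> R) : Prop :=
  [/\ forall p, 0 <= y p,
      forall p, term p -> termval R wwin p <= y p &
      forall p, ~~ term p -> (smax (W p) y + smin (B p) y) / 2 <= y p].

Lemma termval_ge0 p : 0 <= termval R wwin p.
Proof. by rewrite /termval; case: ifP. Qed.

Lemma alphan_term n p : term p -> alpha_ n p = termval R wwin p.
Proof. by case: n => [|n] /= ->. Qed.

Lemma alphanS n p : ~~ term p ->
  alpha_ n.+1 p = (smax (W p) (alpha_ n) + smin (B p) (alpha_ n)) / 2.
Proof. by move=> /negbTE /= ->. Qed.

Lemma alphan_ge0 n p : 0 <= alpha_ n p.
Proof.
elim: n p => [|n IH] p /=; case: ifP => _; rewrite ?termval_ge0 //.
by rewrite divr_ge0 // addr_ge0 ?smax_ge0 ?smin_ge0.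
Qed.

Lemma alphan_le_alphanS n p : alpha_ n p <= alpha_ n.+1 p.
Proof.
elim: n p => [|n IH] p; case tp: (term p); try by rewrite !alphan_term.
  by rewrite /= tp divr_ge0 ?addr_ge0 ?smax_ge0 ?smin_ge0 // => q; apply: (alphan_ge0 0).
by rewrite !alphanS ?tp // ler_pM2r ?invr_gt0 ?ltr0n // lerD ?le_smax2 ?le_smin2.
Qed.

Lemma alphan_nondecreasing p : {homo (fun n => alpha_ n p) : m n / (m <= n)%N >-> m <= n}.
Proof. by apply/nondecreasing_seqP => n; apply: alphan_le_alphanS. Qed.

Lemma alphan_le_super y : richman_super y -> forall n p, alpha_ n p <= y p.
Proof.
case=> y0 yterm ynonterm; elim=> [|n IH] p; case tp: (term p);
  try by rewrite alphan_term ?yterm.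
  by rewrite /= tp y0.
rewrite alphanS ?tp //; apply: le_trans (ynonterm _ _); last by rewrite tp.
by rewrite ler_pM2r ?invr_gt0 ?ltr0n // lerD ?le_smax2 ?le_smin2.
Qed.

Variable x : P -> R.
Hypothesis hx : richman term wwin W B x.

Lemma richman_super_richman : richman_super x.
Proof.
case: hx => x01 [xterm xnonterm]; split=> [p|p /xterm ->//|p /xnonterm ->//].
by case/andP: (x01 p).
Qed.

Lemma alphan_le_richman n p : alpha_ n p <= x p.
Proof. exact: alphan_le_super richman_super_richman n p. Qed.

Lemma cvgn_alphan p : cvgn (fun n => alpha_ n p).
Proof.
apply/cvg_ex; eexists; apply: nondecreasing_cvgn; first exact: alphan_nondecreasing.
exists 1 => _ [n _ <-]; apply: le_trans (alphan_le_richman n p) _.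
by case: hx => x01 _; case/andP: (x01 p).
Qed.

Lemma alphan_le_alpha n p : alpha_ n p <= alpha p.
Proof. exact: nondecreasing_cvgn_le (alphan_nondecreasing p) (@cvgn_alphan p) n. Qed.

Lemma alpha_le_super y p : richman_super y -> alpha p <= y p.
Proof.
move=> ysuper; apply: limr_le; first exact: cvgn_alphan.
by apply: nearW => n; apply: alphan_le_super.
Qed.

End ValueIteration.

Section GreedyAttractor.
Variables (R : realType) (P : finType) (term : pred P) (W B : P -> {set P}).
Variable x : P -> R.
Local Notation T n := (Tn term W B x n).
Local Notation inT := (inT term W B x).

Lemma subset_Tn : {homo (fun n => T n) : m n / (m <= n)%N >-> m \subset n}.
Proof.
apply: homo_leq => [A|A1 A2 A3|n]; [exact: fintype.subxx|exact: fintype.subset_trans|].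
by apply/fintype.subsetP => p pT; rewrite inE pT.
Qed.

Lemma inT_uniform (A : P -> Prop) :
  (forall q, A q -> inT q) -> exists n, forall q, A q -> q \in T n.
Proof.
move=> AT; have /choice [f hf] : forall q, exists n, A q -> q \in T n.
  move=> q; have [/AT [n qT]|nAq] := pselect (A q); first by exists n.
  by exists 0%N.
by exists (\max_q f q) => q /hf; apply/fintype.subsetP/subset_Tn/leq_bigmax.
Qed.

Lemma inT_term p : term p -> inT p.
Proof. by exists 0%N; rewrite inE. Qed.

Lemma inT_greedy p q : greedy W x p q -> inT q -> inT p.
Proof.
move=> gpq [n qT]; exists n.+1; rewrite inE; apply/orP; left; apply/orP; right.
by apply/existsP; exists q; case/andP: (gpq) => -> _; rewrite gpq qT.
Qed.

Lemma inT_black p : (forall q, q \in B p -> inT q) -> inT p.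
Proof.
case/inT_uniform => n BT; exists n.+1; rewrite inE; apply/orP; right.
by apply/fintype.subsetP => q /BT.
Qed.

Lemma greedy_exists p : W p != finset.set0 -> exists q, greedy W x p q.
Proof. by move=> /(smax_mem x) [q qW xq]; exists q; rewrite /greedy qW xq eqxx. Qed.

Definition greedy_trap (U : {set P}) : Prop :=
  {in U, forall p, [/\ ~~ term p, forall q, greedy W x p q -> q \in U &
                      exists2 b, b \in B p & b \in U]}.

Lemma greedy_trap_notinT : greedy_trap [set p | ~~ `[< inT p >]].
Proof.
move=> p; rewrite inE => /asboolPn pT; split.
- by apply/negP => /inT_term.
- by move=> q gpq; rewrite inE; apply/asboolPn => qT; apply: pT (inT_greedy gpq qT).
- apply: contrapT => nb; apply: pT; apply: inT_black => q qB.
  apply: contrapT => qT; apply: nb; exists q => //; rewrite inE; exact/asboolPn.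
Qed.

End GreedyAttractor.

Section GreedyConvergence.
Variables (R : realType) (P : finType) (term wwin : pred P) (W B : P -> {set P}).
Hypothesis hW : forall p, ~~ term p -> W p != finset.set0.
Hypothesis hB : forall p, ~~ term p -> B p != finset.set0.
Variable x : P -> R.
Hypothesis hx : richman term wwin W B x.
Local Notation alpha_ n := (alphan R term wwin W B n).
Local Notation T n := (Tn term W B x n).
Local Notation err n p := (x p - alpha_ n p).

Lemma err_term n p : term p -> err n p = 0.
Proof. by case: hx => _ [xterm _] tp; rewrite alphan_term // xterm // subrr. Qed.

Lemma err_nonincreasing m n p : (m <= n)%N -> err n p <= err m p.
Proof. by move=> mn; rewrite lerB // alphan_nondecreasing. Qed.

Lemma err_step n p a Ea Eb : ~~ term p -> greedy W x p a ->
  err n a <= Ea -> {in B p, forall c, err n c <= Eb} -> err n.+1 p <= (Ea + Eb) / 2.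
Proof.
move=> tp /andP [aW /eqP xa] errA errB; case: hx => _ [_ xnonterm].
have [c cB alpha_c] := smin_mem (alpha_ n) (hB tp).
have alpha_a := le_smax (alpha_ n) aW; have x_c := smin_le x cB; have := errB c cB.
by rewrite alphanS // (xnonterm p tp) alpha_c -xa; lra.
Qed.

Lemma err_Tn m E j p : 0 <= E -> (forall q, err m q <= E) ->
  p \in T j -> err (m + j) p <= (1 - 2^-1 ^+ j) * E.
Proof.
move=> E0 errE; elim: j p => [|j IH] p.
  by rewrite inE => tp; rewrite err_term // expr0 subrr mul0r.
have /andP [boundS_ge0 _] := one_sub_halfX_itv R j.+1.
have boundS : ((1 - 2^-1 ^+ j) * E + E) / 2 = (1 - 2^-1 ^+ j.+1) * E.
  by rewrite exprS; field.
have bound_le : (1 - 2^-1 ^+ j) * E <= E.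
  by rewrite ler_piMl // lerBlDr lerDl exprn_ge0 // invr_ge0.
have errmj q : err (m + j) q <= E := le_trans (err_nonincreasing q (leq_addr j m)) (errE q).
rewrite addnS; have [tp|ntp] := boolP (term p); first by rewrite err_term // mulr_ge0.
rewrite inE => /orP [/orP [pT|/existsP [a /andP [_ /andP [ga aT]]]]|/fintype.subsetP BT].
- apply: le_trans (err_nonincreasing p (leqnSn _)) _; rewrite -boundS.
  by have := IH p pT; lra.
- by rewrite -boundS; exact: err_step ntp ga (IH a aT) (fun c _ => errmj c).
- have [a ga] := greedy_exists x (hW ntp); rewrite -boundS (addrC _ E).
  exact: err_step ntp ga (errmj a) (fun c cB => IH c (BT c cB)).
Qed.

Lemma err_contract K m E : (forall p, 0 < x p -> p \in T K) -> 0 <= E ->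
  (forall q, err m q <= E) -> forall p, err (m + K) p <= (1 - 2^-1 ^+ K) * E.
Proof.
move=> xT E0 errE p; have [/xT pT|xp0] := ltP 0 (x p); first exact: err_Tn.
have /andP [l_ge0 _] := one_sub_halfX_itv R K.
have := alphan_ge0 R term wwin W B (m + K) p; have := mulr_ge0 l_ge0 E0; lra.
Qed.

Lemma err_geometric K : (forall p, 0 < x p -> p \in T K) ->
  forall t p, err (t * K) p <= (1 - 2^-1 ^+ K) ^+ t.
Proof.
move=> xT; elim=> [|t IH] p.
  have := alphan_ge0 R term wwin W B 0 p; case: hx => x01 _.
  by case/andP: (x01 p); rewrite expr0; lra.
rewrite mulSnr exprSr mulrC; apply: err_contract => //.
by rewrite exprn_ge0 //; case/andP: (one_sub_halfX_itv R K).
Qed.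

Lemma alpha_eq_richman_of_inT :
  (forall p, 0 < x p -> inT term W B x p) -> forall p, alpha R term wwin W B p = x p.
Proof.
case/inT_uniform => K xT p; apply/le_anti.
rewrite (alpha_le_super hx _ (richman_super_richman hx)) /= -subr_le0.
apply: le0_of_le_powers (one_sub_halfX_itv R K) _ => t.
by apply: le_trans (err_geometric xT t p); rewrite lerB // (alphan_le_alpha hx).
Qed.

End GreedyConvergence.

Section GreedyTrap.
Variables (R : realType) (P : finType) (term wwin : pred P) (W B : P -> {set P}).
Hypothesis hW : forall p, ~~ term p -> W p != finset.set0.
Variable x : P -> R.
Hypothesis hx : richman term wwin W B x.
Local Notation alpha := (alpha R term wwin W B).

Lemma alpha_lt_on_plateau (S : {set P}) (M : R) : 0 < M ->
  {in S, forall p, ~~ term p /\ x p = M} ->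
  {in S, forall p q, q \in W p -> q \notin S -> x q < M} ->
  {in S, forall p, exists2 b, b \in B p & b \in S} ->
  {in S, forall p, alpha p < M}.
Proof.
move=> M0 SM SW SB p pS; have [x01 [xterm xnonterm]] := hx.
have [c /andP [c0 cM] below] := exists_gap_below x M0.
pose y q := if q \in S then c else x q.
suff ysuper : richman_super term wwin W B y.
  by apply: le_lt_trans (alpha_le_super hx p ysuper) _; rewrite /y pS.
split=> [q|q tq|q ntq].
- by rewrite /y; case: ifP => // _; case/andP: (x01 q).
- have /negbTE qS : q \notin S by apply: contraL tq => /SM [].
  by rewrite /y qS xterm.
- have [qS|qS] := boolP (q \in S).
    have -> : y q = c by rewrite /y qS.
    have smaxW : smax (W q) y <= c.
      apply: smax_le => // r rW; rewrite /y; case: ifPn => // rS.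
      exact/below/(SW q).
    have [b bB bS] := SB q qS; have := smin_le y bB; rewrite {2}/y bS; lra.
  have y_le_x r : y r <= x r by rewrite /y; case: ifPn => // /SM [_ ->]; apply: ltW.
  have -> : y q = x q by rewrite /y (negbTE qS).
  rewrite (xnonterm q ntq) ler_pM2r ?invr_gt0 //.
  by rewrite lerD ?le_smax2 ?le_smin2 // => r _; apply: y_le_x.
Qed.

Lemma greedy_trap_max (U : {set P}) q : greedy_trap term W B x U ->
  q \in U -> x q = smax U x ->
  smax (W q) x = x q /\ exists2 b, b \in B q & (b \in U) && (x b == x q).
Proof.
move=> trapU qU xq; have [ntq greedyU [b bB bU]] := trapU q qU.
have [a ga] := greedy_exists x (hW ntq); have aU := greedyU a ga.
case/andP: ga => aW /eqP xa; case: hx => _ [_ xnonterm].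
have := le_smax x aU; have := le_smax x bU; have := smin_le x bB.
have := xnonterm q ntq; rewrite -xq -xa => xqE xb_min xb_le xa_le.
by split; [|exists b => //; rewrite bU /=; apply/eqP]; lra.
Qed.

Lemma greedy_trap_alpha_lt (U : {set P}) p0 : greedy_trap term W B x U ->
  p0 \in U -> 0 < x p0 -> exists2 p, p \in U & alpha p < x p.
Proof.
move=> trapU p0U xp0; have U0 : U != finset.set0 by apply/set0Pn; exists p0.
have [pm pmU xpm] := smax_mem x U0; pose S := [set q in U | x q == x pm].
have SU q : q \in S -> q \in U by rewrite inE => /andP [].
have Smax q : q \in S -> x q = smax U x by rewrite inE xpm => /andP [_ /eqP].
exists pm => //; apply: (@alpha_lt_on_plateau S) => [||q qS r rW|q qS|].
- by apply: lt_le_trans xp0 _; rewrite -xpm le_smax.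
- move=> q qS; have [ntq _ _] := trapU q (SU q qS).
  by split=> //; rewrite (Smax q qS) xpm.
- have [smaxW _] := greedy_trap_max trapU (SU q qS) (Smax q qS).
  have [_ greedyU _] := trapU q (SU q qS).
  rewrite lt_neqAle -xpm -(Smax q qS) -smaxW le_smax // andbT => rS.
  apply: contraNneq rS => xr; rewrite inE greedyU /=; last by rewrite /greedy rW xr eqxx.
  by rewrite xr smaxW Smax // xpm.
- have [_ [b bB /andP [bU /eqP xb]]] := greedy_trap_max trapU (SU q qS) (Smax q qS).
  by exists b => //; rewrite inE bU xb (Smax q qS) xpm eqxx.
- by rewrite inE pmU eqxx.
Qed.

Lemma inT_of_alpha_eq_richman : (forall p, alpha p = x p) ->
  forall p, 0 < x p -> inT term W B x p.
Proof.
move=> alpha_x p xp; apply: contrapT => pT.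
have [|q _] := greedy_trap_alpha_lt (@greedy_trap_notinT _ _ term W B x) _ xp.
  by rewrite inE; apply/asboolPn.
by rewrite alpha_x ltxx.
Qed.

End GreedyTrap.

Unset Implicit Arguments. Set Strict Implicit.

Theorem proposition2 (R : realType) (P : finType) (term wwin : pred P)
    (W B : P -> {set P})
    (hW : forall p, ~~ term p -> W p != finset.set0)
    (hB : forall p, ~~ term p -> B p != finset.set0)
    (x : P -> R) (hx : richman term wwin W B x) :
  (forall p, @alpha R P term wwin W B p = x p) <->
  (forall p, 0 < x p -> @inT R P term W B x p).
Proof.
split; [exact: inT_of_alpha_eq_richman | exact: alpha_eq_richman_of_inT].
Qed.
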